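(* Let $D_S>0$, $c_1>0$ and $c_2\ge 0$ be the constants described in the context, and consider, for $t\ge 0$, $$h(t) = e^{tD_S/2} - 1 - \frac{tD_S - c_2}{c_1}.$$ Then there exist $0\le \underline{t} < \overline{t}$ such that $h(t)\le 0$ for all $t\in[\underline{t},\overline{t}]$, where $h(\underline{t}) = h(\overline{t}) = 0$, if and only if $$c_1 < 2 \quad\text{and}\quad c_2 < c_1 - 2\left(1-\log(2/c_1)\right).$$
   Context: Setting: $\mathcal{X}\subset\mathbb{R}^d$ is compact; $f:\mathbb{R}^d\to\mathbb{R}^d$, $g^c:\mathbb{R}^d\to\mathbb{R}^{d\times m}$, $g^{uc}:\mathbb{R}^d\to\mathbb{R}^{d\times p}$, $g=[g^c\ g^{uc}]$, with $f$ and $g$ Lipschitz on $\mathcal{X}$ in the $\infty$-norm with constants $D_f$, $D_g$; $D_S\coloneqq D_f+D_g$. Given $x_0\in\mathcal{X}$ and a target $x_{tg}\in\mathbb{R}^d$, let $g^c_0\coloneqq g^c(x_0)$ (assumed to have full row rank $d$), $g^{uc}_0\coloneqq g^{uc}(x_0)$, and $(g^c_0)^\dagger$ its Moore–Penrose pseudoinverse. All matrix norms are induced $\infty$-norms. Define $c \coloneqq \|f(x_0)\|_\infty + \|g^{uc}_0\|_\infty + D_S\|x_{tg}-x_0\|_\infty$, $c_1 \coloneqq 4c\|(g^c_0)^\dagger\|_\infty$, and $c_2 \coloneqq 4D_S\|(g^c_0)^\dagger\|_\infty\|g^{uc}_0\|_\infty\|\alpha_2\|_\infty$ with $\alpha_2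 = \frac{1}{4}\mathbf{1}_p$ ($\mathbf{1}_p$ the all-ones vector in $\mathbb{R}^p$). *)

From Stdlib Require Import Reals Lra.
Open Scope R_scope.

Definition h (DS c1 c2 t : R) : R :=
  exp (t * DS / 2) - 1 - (t * DS - c2) / c1.

From Stdlib Require Import Reals Lra.
Open Scope R_scope.

(* Substituting s = t D_S / 2 turns h into e^s - (k s + m) with k = 2 / c1 and
   m = 1 - c2 / c1.  By strict convexity such a function has two roots with a nonpositive
   stretch between them iff its minimum k - k ln k - m, attained at s = ln k, is negative.
   As m <= 1 the function is nonnegative at 0, so the roots can be taken in [0, oo) iff
   ln k > 0, i.e. k > 1; for k <= 1 it even stays nonnegative on all of [0, oo). *)

Lemma exp_tangent_le a s : exp a * (1 + (s - a)) <= exp s.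
Proof.
  replace (exp s) with (exp a * exp (s - a)) by (rewrite <- exp_plus; f_equal; ring).
  apply Rmult_le_compat_l; [apply Rlt_le, exp_pos | apply exp_ineq1_le].
Qed.

Lemma exp_tangent_lt a s : a <> s -> exp a * (1 + (s - a)) < exp s.
Proof.
  intro Has.
  replace (exp s) with (exp a * exp (s - a)) by (rewrite <- exp_plus; f_equal; ring).
  apply Rmult_lt_compat_l; [apply exp_pos | apply exp_ineq1; lra].
Qed.

Lemma exp_convex a t b : a <= t <= b ->
  (b - a) * exp t <= (b - t) * exp a + (t - a) * exp b.
Proof.
  intros Ht.
  pose proof (exp_tangent_le t a) as Ta; pose proof (exp_tangent_le t b) as Tb.
  apply Rmult_le_compat_l with (r := b - t) in Ta; [|lra].
  apply Rmult_le_compat_l with (r := t - a) in Tb; [|lra].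
  nra.
Qed.

Lemma exp_midpoint_lt a b : a < b -> 2 * exp ((a + b) / 2) < exp a + exp b.
Proof.
  intro Hab.
  pose proof (exp_tangent_lt ((a + b) / 2) a ltac:(lra)).
  pose proof (exp_tangent_lt ((a + b) / 2) b ltac:(lra)).
  nra.
Qed.

Lemma exp_ge_quadratic s : 0 <= s -> 1 + s + s * s / 4 <= exp s.
Proof.
  intro Hs.
  replace (exp s) with (exp (s / 2) * exp (s / 2)) by (rewrite <- exp_plus; f_equal; field).
  pose proof (exp_ineq1_le (s / 2)).
  replace (1 + s + s * s / 4) with ((1 + s / 2) * (1 + s / 2)) by field.
  apply Rmult_le_compat; lra.
Qed.

Section ExpSubAffine.

Variables k m : R.

Definition exp_sub_affine s := exp s - (k * s + m).

Lemma exp_sub_affine_continuous : continuity exp_sub_affine.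
Proof. unfold exp_sub_affine; reg. Qed.

Lemma exp_sub_affine_nonpos_between a b t :
  exp_sub_affine a <= 0 -> exp_sub_affine b <= 0 -> a <= t <= b -> exp_sub_affine t <= 0.
Proof.
  unfold exp_sub_affine; intros Ha Hb Ht.
  pose proof (exp_convex a t b Ht).
  destruct (Req_dec a b) as [<-|Hab]; [replace t with a by lra; lra|].
  assert (Hdiff : (b - a) * (exp t - (k * t + m)) <= 0) by nra.
  nra.
Qed.

Lemma exp_sub_affine_midpoint_lt0 a b : a < b ->
  exp_sub_affine a = 0 -> exp_sub_affine b = 0 -> exp_sub_affine ((a + b) / 2) < 0.
Proof.
  unfold exp_sub_affine; intros Hab Ha Hb.
  pose proof (exp_midpoint_lt a b Hab).
  lra.
Qed.

Lemma exp_sub_affine_ge0 s : k <= 1 -> m <= 1 -> 0 <= s -> 0 <= exp_sub_affine s.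
Proof.
  unfold exp_sub_affine; intros Hk Hm Hs.
  pose proof (exp_ineq1_le s).
  nra.
Qed.

Lemma exp_sub_affine_ln : 0 < k -> exp_sub_affine (ln k) = k - k * ln k - m.
Proof. intro Hk; unfold exp_sub_affine; rewrite exp_ln by exact Hk; ring. Qed.

Lemma exp_sub_affine_ge_ln s : 0 < k -> exp_sub_affine (ln k) <= exp_sub_affine s.
Proof.
  intro Hk; unfold exp_sub_affine.
  pose proof (exp_tangent_le (ln k) s) as T; rewrite exp_ln in * by exact Hk.
  lra.
Qed.

Lemma exp_sub_affine_gt0_beyond a : exists s, a < s /\ 0 < exp_sub_affine s.
Proof.
  (* past 4 K the term s^2 / 4 of the bound e^s >= 1 + s + s^2 / 4 dominates the line *)
  set (K := Rabs k + Rabs m + 1).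
  exists (Rabs a + 4 * K); unfold exp_sub_affine.
  pose proof (Rle_abs a); pose proof (Rle_abs k); pose proof (Rle_abs m).
  pose proof (Rabs_pos a); pose proof (Rabs_pos k); pose proof (Rabs_pos m).
  pose proof (exp_ge_quadratic (Rabs a + 4 * K) ltac:(unfold K; lra)).
  split; [unfold K; lra|].
  assert (Hsq : K * (Rabs a + 4 * K) <= (Rabs a + 4 * K) * (Rabs a + 4 * K) / 4)
    by (unfold K in *; nra).
  unfold K in *; nra.
Qed.

End ExpSubAffine.

Definition nonpos_root_interval (f : R -> R) : Prop :=
  exists a b, 0 <= a /\ a < b /\ f a = 0 /\ f b = 0 /\ (forall t, a <= t <= b -> f t <= 0).

Lemma nonpos_root_interval_rescale (f g : R -> R) (l : R) :
  0 < l -> (forall t, g t = f (t * l)) -> nonpos_root_interval g -> nonpos_root_interval f.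
Proof.
  intros Hl Hgf (a & b & Ha & Hab & ga & gb & Hg).
  assert (Hinv : 0 < / l) by (apply Rinv_0_lt_compat; exact Hl).
  assert (Hll : l * / l = 1) by (apply Rinv_r; lra).
  exists (a * l), (b * l); rewrite <- !Hgf.
  repeat split; [nra | nra | exact ga | exact gb |].
  intros s Hs.
  replace s with (s * / l * l) by (rewrite Rmult_assoc, Rinv_l, Rmult_1_r; lra).
  rewrite <- Hgf; apply Hg; split; nra.
Qed.

Lemma nonpos_root_interval_scale (f g : R -> R) (l : R) :
  0 < l -> (forall t, g t = f (t * l)) ->
  nonpos_root_interval g <-> nonpos_root_interval f.
Proof.
  intros Hl Hgf; split; [apply (nonpos_root_interval_rescale f g l Hl Hgf)|].
  apply (nonpos_root_interval_rescale g f (/ l)); [apply Rinv_0_lt_compat; exact Hl|].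
  intro t; rewrite Hgf, Rmult_assoc, Rinv_l, Rmult_1_r; lra.
Qed.

Lemma exp_sub_affine_nonpos_root_interval k m : m <= 1 ->
  nonpos_root_interval (exp_sub_affine k m) <-> 1 < k /\ k - k * ln k - m < 0.
Proof.
  intro Hm; split.
  - intros (a & b & Ha & Hab & fa & fb & _).
    pose proof (exp_sub_affine_midpoint_lt0 k m a b Hab fa fb) as Hmid.
    assert (Hk : 1 < k).
    { destruct (Rle_or_lt k 1) as [Hk|Hk]; [|exact Hk].
      pose proof (exp_sub_affine_ge0 k m ((a + b) / 2) Hk Hm ltac:(lra)); lra. }
    split; [exact Hk|].
    pose proof (exp_sub_affine_ge_ln k m ((a + b) / 2) ltac:(lra)).
    rewrite exp_sub_affine_ln in * by lra; lra.
  - intros [Hk Hmin].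
    assert (Hs0 : 0 < ln k) by (rewrite <- ln_1; apply ln_increasing; lra).
    assert (Hfs0 : exp_sub_affine k m (ln k) < 0) by (rewrite exp_sub_affine_ln; lra).
    assert (Hf0 : 0 <= exp_sub_affine k m 0) by (unfold exp_sub_affine; rewrite exp_0; lra).
    destruct (exp_sub_affine_gt0_beyond k m (ln k)) as (S & HS & HfS).
    destruct (IVT_cor _ 0 (ln k) (exp_sub_affine_continuous k m) ltac:(lra) ltac:(nra))
      as (a & Ha & fa).
    destruct (IVT_cor _ (ln k) S (exp_sub_affine_continuous k m) ltac:(lra) ltac:(nra))
      as (b & Hb & fb).
    assert (a <> ln k) by (intros ->; lra).
    assert (b <> ln k) by (intros ->; lra).
    exists a, b; repeat split; try lra.
    intros t Ht; apply (exp_sub_affine_nonpos_between k m a b); lra.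
Qed.

Theorem lemma2 (DS c1 c2 : R) (hDS : 0 < DS) (hc1 : 0 < c1) (hc2 : 0 <= c2) :
  (exists tl tu : R,
      0 <= tl /\ tl < tu /\
      h DS c1 c2 tl = 0 /\ h DS c1 c2 tu = 0 /\
      (forall t, tl <= t <= tu -> h DS c1 c2 t <= 0))
  <->
  (c1 < 2 /\ c2 < c1 - 2 * (1 - ln (2 / c1))).
Proof.
  assert (Hh : forall t, h DS c1 c2 t = exp_sub_affine (2 / c1) (1 - c2 / c1) (t * (DS / 2))).
  { intro t; unfold h, exp_sub_affine.
    replace (t * DS / 2) with (t * (DS / 2)) by field; field; lra. }
  assert (Hinv : 0 < / c1) by (apply Rinv_0_lt_compat; exact hc1).
  assert (Hc1inv : c1 * / c1 = 1) by (apply Rinv_r; lra).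
  assert (Hm : 1 - c2 / c1 <= 1) by (unfold Rdiv; nra).
  fold (nonpos_root_interval (h DS c1 c2)).
  rewrite (nonpos_root_interval_scale _ _ (DS / 2) ltac:(lra) Hh),
    (exp_sub_affine_nonpos_root_interval _ _ Hm).
  assert (Hk : 1 < 2 / c1 <-> c1 < 2) by (unfold Rdiv; split; intro; nra).
  assert (Hmin : 2 / c1 - 2 / c1 * ln (2 / c1) - (1 - c2 / c1) < 0
                 <-> c2 < c1 - 2 * (1 - ln (2 / c1))).
  { replace (2 / c1 - 2 / c1 * ln (2 / c1) - (1 - c2 / c1))
      with ((c2 - (c1 - 2 * (1 - ln (2 / c1)))) * / c1) by (field; lra).
    split; intro; nra. }
  tauto.
Qed.
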